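(* Let $\sigma=(\sigma_n)_{n\in\mathbb{N}}$ be an increasing sequence of positive integers, let $\gamma$ be a positive integer, and define $\tau_n=\sigma_{\gamma n}$. Then a nonnegative random variable $W$ is $\sigma$-summable if and only if it is $\tau$-summable.
   Context: Let $W$ be a nonnegative random variable and $\sigma=(\sigma_n)_{n\in\mathbb{N}}$ a sequence of positive integers (or reals $\ge 1$). Let $(W_n^j)_{n,j\in\mathbb{N}}$ be independent copies of $W$ and $\Lambda_n=\min_{1\le j\le\sigma_n}W_n^j$. $W$ is called $\sigma$-summable if $\Pr\{\sum_n\Lambda_n<\infty\}>0$. *)

From HB Require Import structures.
From mathcomp Require Import all_boot all_order all_algebra.
From mathcomp Require Import all_classical all_reals all_analysis.
Set Implicit Arguments. Unset Strict Implicit. Unset Printing Implicit Defensive.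
Import Order.TTheory GRing.Theory Num.Theory.
Local Open Scope classical_set_scope.
Local Open Scope ring_scope.

Definition mutually_independent d (T : measurableType d) (R : realType)
  (P : probability T R) (I : eqType) (X : I -> T -> R) : Prop :=
  forall (s : seq I) (B : I -> set R),
    uniq s -> (forall i, i \in s -> measurable (B i)) ->
    P (\bigcap_(i in [set` s]) (X i @^-1` B i)) =
    (\prod_(i <- s) P (X i @^-1` B i))%E.

Definition same_distribution d d' (T : measurableType d) (T' : measurableType d')
  (R : realType) (P : probability T R) (Q : probability T' R)
  (Y : T -> R) (W : T' -> R) : Prop :=
  forall B : set R, measurable B -> P (Y @^-1` B) = Q (W @^-1` B).

(* Lambda_n = min_{1 <= j <= sigma_n} W_n^j ; copies indexed here by
   j = 0, ..., sigma_n - 1 (the seed X (n,0) is itself among them when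
   sigma_n >= 1). *)
Definition Lambda (T : Type) (R : realType) (X : nat * nat -> T -> R)
  (sigma : nat -> nat) (n : nat) (w : T) : R :=
  \big[Num.min/X (n, 0%N) w]_(j < sigma n) X (n, nat_of_ord j) w.

(* sigma-summability, computed with the family X of independent copies of W:
   Pr { sum_n Lambda_n < oo } > 0. *)
Definition summable_for d (T : measurableType d) (R : realType)
  (P : probability T R) (X : nat * nat -> T -> R) (sigma : nat -> nat) : Prop :=
  (0 < P [set w | (\sum_(0 <= n <oo) (Lambda X sigma n w)%:E < +oo)%E])%E.

From HB Require Import structures.
From mathcomp Require Import all_boot all_order all_algebra.
From mathcomp Require Import all_classical all_reals all_analysis.
From mathcomp Require Import measurable_realfun.
Import Order.TTheory GRing.Theory Num.Theory.
Local Open Scope classical_set_scope.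
Local Open Scope ring_scope.

(* Since sigma is nondecreasing, tau_n = sigma_(gamma n) >= sigma_n, so
   Lambda^tau_n <= Lambda^sigma_n and sigma-summability implies tau-summability.
   Conversely, for n = gamma k + r with r < gamma we have sigma_n >= tau_k, so
   Lambda^sigma_n is at most the minimum of the first tau_k copies in row n.
   For each residue r, the rows gamma k + r (k in N) carry a copy of the whole
   tau-problem: by relabelling the i.i.d. array, the event A_r that
   sum_k min_(j < tau_k) W_(gamma k + r)^j is finite has the same probability
   p > 0 as tau-summability.  The events A_r depend on disjoint sets of
   coordinates, hence are independent, and on their intersection, of
   probability p^gamma > 0, the series sum_n Lambda^sigma_n converges.
   Equality of laws and independence are obtained on the law of the whole
   array in R^(N x N), from uniqueness of measures agreeing on the pi-system
   of cylinders. *)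

Section extended_series.
Local Open Scope ereal_scope.
Context (R : realType).

Lemma cvgn_limn_esup_le_einf (u : (\bar R)^nat) :
  limn_esup u <= limn_einf u -> cvgn u.
Proof.
move=> supu_le_infu.
have infu_supu : limn_einf u = limn_esup u.
  by apply/le_anti; rewrite supu_le_infu limn_einf_sup.
apply/cvg_ex; exists (limn_esup u).
apply: (@squeeze_cvge _ _ _ _ (einfs u) u (esups u)).
- apply: nearW => n; apply/andP; split.
  + by apply: ereal_inf_lbound; exists n => /=.
  + by apply: ereal_sup_ubound; exists n => /=.
- rewrite -infu_supu limn_einf_lim.
  by have /cvg_ex[l ul] := @is_cvg_einfs _ u; rewrite (cvg_lim _ ul).
- rewrite limn_esup_lim.
  by have /cvg_ex[l ul] := @is_cvg_esups _ u; rewrite (cvg_lim _ ul).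
Qed.
Arguments cvgn_limn_esup_le_einf {u}.

Lemma measurable_series_lty d (T : measurableType d) (f : nat -> T -> R) :
  (forall n, measurable_fun setT (f n)) ->
  measurable [set w | \sum_(0 <= n <oo) (f n w)%:E < +oo].
Proof.
move=> mf.
pose s w N : \bar R := \sum_(0 <= n < N) (f n w)%:E.
have ms N : measurable_fun setT (s ^~ N).
  by apply: emeasurable_sum => n; exact/measurable_EFinP.
have msup : measurable_fun setT (fun w => limn_esup (s w)).
  exact: (measurable_fun_limn_esup (f := fun N w => s w N)).
have minf : measurable_fun setT (fun w => limn_einf (s w)).
  apply: measurableT_comp => //.
  by apply: (measurable_fun_limn_esup (f := fun N w => - s w N)) => N;
    exact: measurableT_comp.
pose C := [set w | limn_esup (s w) <= limn_einf (s w)].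
have mC : measurable C.
  by rewrite -[C]setTI; exact: measurable_lee.
(* Off the convergence set C the series takes the default value [point]. *)
have -> : [set w | \sum_(0 <= n <oo) (f n w)%:E < +oo] =
    (C `&` [set w | limn_esup (s w) < +oo]) `|`
    (~` C `&` [set w | (point : \bar R) < +oo]).
  apply/seteqP; split => w /=;
    have -> : \sum_(0 <= n <oo) (f n w)%:E = limn (s w) by [].
  - have [Cw|nCw] := boolP (limn_esup (s w) <= limn_einf (s w)).
      by rewrite -(is_cvg_limn_esupE (cvgn_limn_esup_le_einf Cw)) => ?; left.
    rewrite dvgP; first by move=> pt; right; split => //; exact/negP.
    move=> /cvg_ex[l sl]; move: nCw.
    by have [-> ->] := cvg_limn_einf_sup sl; rewrite lexx.
  - case=> -[Cw sw]; first by rewrite -(is_cvg_limn_esupE (cvgn_limn_esup_le_einf Cw)).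
    rewrite dvgP// => /cvg_ex[l sl]; apply: Cw; rewrite /C /=.
    by have [-> ->] := cvg_limn_einf_sup sl.
apply: measurableU; apply: measurableI => //.
- rewrite -[X in measurable X]setTI.
  exact: (@measurable_lte _ _ _ setT measurableT _ (fun=> +oo)).
- exact: measurableC.
- have [pty|ptNy] := pselect ((point : \bar R) < +oo).
    by rewrite (_ : [set _ | _] = setT)//; apply/seteqP; split.
  by rewrite (_ : [set _ | _] = set0)//; apply/seteqP; split.
Qed.

Lemma sum_le_residue_sums (f : nat -> \bar R) g N : (0 < g)%N ->
  (forall n, 0 <= f n) ->
  \sum_(0 <= n < N) f n <= \sum_(0 <= r < g) \sum_(0 <= k < N) f (g * k + r)%N.
Proof.
move=> g_gt0 f_ge0.
have blocks M : \sum_(0 <= n < g * M) f n =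
    \sum_(0 <= k < M) \sum_(0 <= r < g) f (g * k + r)%N.
  elim: M => [|M IH]; first by rewrite muln0 !big_geq.
  rewrite big_nat_recr // -IH mulnS (big_cat_nat (n := (g * M)%N)) ?leq_addl//=.
  congr (_ + _); rewrite -{1}(add0n (g * M)%N) big_addn addnK.
  by apply: eq_bigr => r _; rewrite addnC.
rewrite exchange_big_nat -blocks.
rewrite [leRHS](big_cat_nat (n := N)) ?leq_pmull//=.
by rewrite leeDl// sume_ge0.
Qed.

Lemma nneseries_lty_residues (a : nat -> R) (b : nat -> nat -> R) g :
  (0 < g)%N -> (forall n, 0 <= a n)%R -> (forall r k, 0 <= b r k)%R ->
  (forall n, a n <= b (n %% g)%N (n %/ g)%N)%R ->
  (forall r, (r < g)%N -> \sum_(0 <= k <oo) (b r k)%:E < +oo) ->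
  \sum_(0 <= n <oo) (a n)%:E < +oo.
Proof.
move=> g_gt0 a_ge0 b_ge0 ab b_lty.
apply: (@le_lt_trans _ _ (\sum_(0 <= r < g) \sum_(0 <= k <oo) (b r k)%:E)).
  apply: lime_le; first by apply: is_cvg_nneseries => n _ _; rewrite lee_fin.
  apply: nearW => N /=.
  pose c n := (b (n %% g)%N (n %/ g)%N)%:E.
  apply: (@le_trans _ _ (\sum_(0 <= n < N) c n)).
    by apply: lee_sum => n _; rewrite lee_fin.
  apply: le_trans (@sum_le_residue_sums c g N g_gt0 _) _ => [n|].
    by rewrite lee_fin.
  rewrite big_seq [leRHS]big_seq; apply: lee_sum => r.
  rewrite mem_index_iota => /andP[_ rg].
  apply: le_trans (nneseries_lim_ge N _) => [|k _ _]; last by rewrite lee_fin.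
  apply: lee_sum => k _; rewrite /c.
  by rewrite -modnDml mulnC modnMl add0n modn_small// divnMDl// divn_small// addn0.
rewrite big_seq; apply: lte_sum_pinfty => r.
by rewrite mem_index_iota => /andP[_]; exact: b_lty.
Qed.

End extended_series.

Lemma measurable_bigmin d (T : measurableType d) (R : realType)
    (f0 : T -> R) (f : nat -> T -> R) k :
  measurable_fun setT f0 -> (forall j, measurable_fun setT (f j)) ->
  measurable_fun setT (fun x => \big[Num.min/f0 x]_(j < k) f j x).
Proof.
move=> mf0; elim: k f => [|k IH] f mf.
  by rewrite (_ : (fun x => _) = f0)//; apply/funext => x; rewrite big_ord0.
rewrite (_ : (fun x => _) = (fun x => Num.min (f 0%N x)
    (\big[Num.min/f0 x]_(j < k) f j.+1 x))); last first.
  by apply/funext => x; rewrite big_ord_recl.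
exact: measurable_minr (mf 0%N) (IH (fun j => f j.+1) (fun j => mf j.+1)).
Qed.

Section probability_lemmas.
Local Open Scope ereal_scope.
Context {d} {T : measurableType d} {R : realType} (mu : probability T R).

Lemma measureI_conull (A G : set T) : measurable A -> measurable G ->
  mu (~` G) = 0 -> mu (A `&` G) = mu A.
Proof.
move=> mA mG G0; rewrite [RHS](measureDI mu mA mG).
rewrite (@subset_measure0 _ _ _ mu (A `\` G) (~` G)) ?add0e//.
- exact: measurableD.
- exact: measurableC.
Qed.

Lemma product_rule_sigma_l (C : set (set T)) (B : set T) :
  C `<=` measurable -> setI_closed C -> C setT -> measurable B ->
  (forall A, C A -> mu (A `&` B) = mu A * mu B) ->
  forall A, <<s C >> A -> mu (A `&` B) = mu A * mu B.
Proof.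
move=> Cm CI CT mB CB A sA.
(* A |-> mu (A `&` B) and A |-> mu A * mu B are finite measures that agree on the
   pi-system C, hence on <<s C >>. *)
pose r := NngNum (fine_ge0 (measure_ge0 mu B)).
have scaleE A' : mscale r mu A' = mu A' * mu B.
  by rewrite /mscale /r /= fineK ?fin_num_measure// muleC.
have cover : \bigcup_(k : nat) (setT : set T) = setT.
  by rewrite bigcup_const//; exists 0%N.
have CE A' : C A' -> mrestr mu mB A' = mscale r mu A' by rewrite scaleE; exact: CB.
have fin (k : nat) : mrestr mu mB setT < +oo.
  by rewrite /mrestr setTI ltey_eq fin_num_measure.
rewrite -scaleE; exact: (g_sigma_algebra_measure_unique C Cm (fun=> setT) (fun=> CT)
  cover (mrestr mu mB) (mscale r mu) CI CE fin A sA).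
Qed.

Lemma product_rule_sigma (C1 C2 : set (set T)) :
  C1 `<=` measurable -> setI_closed C1 -> C1 setT ->
  C2 `<=` measurable -> setI_closed C2 -> C2 setT ->
  (forall A1 A2, C1 A1 -> C2 A2 -> mu (A1 `&` A2) = mu A1 * mu A2) ->
  forall A1 A2, <<s C1 >> A1 -> <<s C2 >> A2 ->
  mu (A1 `&` A2) = mu A1 * mu A2.
Proof.
move=> C1m C1I C1T C2m C2I C2T C12 A1 A2 sA1 sA2.
have mA1 : measurable A1.
  by apply: smallest_sub sA1 => //; exact: sigma_algebra_measurable.
rewrite setIC muleC.
apply: (@product_rule_sigma_l C2 A1 C2m C2I C2T mA1 _ A2 sA2) => A CA.
rewrite setIC muleC.
by apply: (@product_rule_sigma_l C1 A C1m C1I C1T (C2m _ CA) _ A1 sA1) => A' CA';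
  exact: C12.
Qed.

End probability_lemmas.

Definition array (R : realType) := (nat * nat -> R)%type.
(* [g_sigma_algebraType] needs a pointed carrier; the point is irrelevant. *)
HB.instance Definition _ (R : realType) := Choice.on (array R).
HB.instance Definition _ (R : realType) := isPointed.Build (array R) (fun=> 0%R).

Section cylinders.
Context {R : realType}.

Definition cylinder (s : seq (nat * nat)) (B : nat * nat -> set R) :
  set (array R) := [set u | forall i, i \in s -> B i (u i)].

Definition cylinders (S : set (nat * nat)) : set (set (array R)) :=
  [set A | exists s B, [/\ forall i, i \in s -> S i,
    forall i, measurable (B i) & A = cylinder s B]].

Lemma cylinder_nil B : cylinder [::] B = setT.
Proof. by apply/seteqP; split => u // _ i; rewrite in_nil. Qed.

Lemma cylinder_cons i s B :
  cylinder (i :: s) B = [set u | B i (u i)] `&` cylinder s B.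
Proof.
apply/seteqP; split => u /=.
  move=> Bu; split; first by apply: Bu; rewrite mem_head.
  by move=> j js; apply: Bu; rewrite in_cons js orbT.
by move=> [Biu Bu] j; rewrite in_cons => /orP[/eqP->|]//; exact: Bu.
Qed.

Lemma cylinders_setT S : cylinders S setT.
Proof. by exists [::], (fun=> setT); rewrite cylinder_nil. Qed.

Lemma cylinders_setI_closed S : setI_closed (cylinders S).
Proof.
move=> _ _ [s1 [B1 [s1S mB1 ->]]] [s2 [B2 [s2S mB2 ->]]].
exists (s1 ++ s2), (fun i => (if i \in s1 then B1 i else setT) `&`
                             (if i \in s2 then B2 i else setT)); split.
- by move=> i; rewrite mem_cat => /orP[/s1S|/s2S].
- by move=> i; apply: measurableI; case: ifP.
apply/seteqP; split => u /=.
  by move=> [B1u B2u] i _; split; case: ifP => // ?; [exact: B1u|exact: B2u].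
by move=> Bu; split => i si; have := Bu i; rewrite mem_cat si ?orbT => /(_ isT)[].
Qed.

Lemma subset_cylinders {S S' : set (nat * nat)} : S `<=` S' ->
  cylinders S `<=` cylinders S'.
Proof. by move=> SS' _ [s [B [sS mB ->]]]; exists s, B; split => // i /sS /SS'. Qed.

Lemma sigma_cylinders_sub {S S' : set (nat * nat)} : S `<=` S' ->
  <<s cylinders S >> `<=` <<s cylinders S' >>.
Proof. by move=> SS'; apply: sub_sigma_algebra2; exact: subset_cylinders. Qed.

End cylinders.

Notation array_space R S := (g_sigma_algebraType (@cylinders R S)).

Lemma measurable_preimage_cylinder d (T : measurableType d) (R : realType)
    (F : T -> array R) s B :
  (forall i, i \in s -> measurable_fun setT (fun w => F w i)) ->
  (forall i, measurable (B i)) -> measurable (F @^-1` cylinder s B).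
Proof.
elim: s => [|i s IH] mF mB; first by rewrite cylinder_nil preimage_setT.
rewrite cylinder_cons preimage_setI; apply: measurableI.
  by rewrite -[X in measurable X]setTI; apply: (mF i (mem_head _ _)).
by apply: IH => // j js; apply: mF; rewrite in_cons js orbT.
Qed.

Lemma measurable_fun_array d (T : measurableType d) (R : realType) S
    (F : T -> array_space R S) :
  (forall i, S i -> measurable_fun setT (fun w => F w i)) -> measurable_fun setT F.
Proof.
move=> mF; apply: (@measurability _ _ _ _ setT F (cylinders S) erefl).
move=> _ [A [s [B [sS mB ->]]] <-]; rewrite setTI.
by apply: measurable_preimage_cylinder => // i /sS; exact: mF.
Qed.

Lemma measurable_coord (R : realType) S i : S i ->
  measurable_fun (setT : set (array_space R S)) (fun u => u i).
Proof.
move=> Si _ Y mY; rewrite setTI; apply: sub_sigma_algebra.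
exists [:: i], (fun=> Y); split => //; first by move=> j; rewrite mem_seq1 => /eqP->.
apply/seteqP; split => u /=; first by move=> Yu j; rewrite mem_seq1 => /eqP->.
by apply; rewrite mem_head.
Qed.

Section row_minima.
Context {R : realType}.
Implicit Types (rho row : nat -> nat) (u : array R).

Definition rowmin rho row n u : R :=
  \big[Num.min/u (row n, 0%N)]_(j < rho n) u (row n, nat_of_ord j).

Definition rowmin_summable rho row : set (array R) :=
  [set u | (\sum_(0 <= n <oo) (rowmin rho row n u)%:E < +oo)%E].

Lemma rowmin_ge0 rho row n u : (forall ij, 0 <= u ij) -> 0 <= rowmin rho row n u.
Proof. by move=> u_ge0; apply: le_bigmin. Qed.

Lemma sigma_rowmin_summable S rho row : (forall n j, S (row n, j)) ->
  <<s cylinders S >> (rowmin_summable rho row).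
Proof.
move=> rowS.
apply: (@measurable_series_lty R _ (array_space R S) (rowmin rho row)) => n.
apply: (@measurable_bigmin _ (array_space R S) R (fun u => u (row n, 0%N))
  (fun j u => u (row n, j)) (rho n)) => [|j]; exact: measurable_coord.
Qed.

Lemma rowmin_summable_le (sigma tau : nat -> nat) u :
  (forall ij, 0 <= u ij) -> (forall n, (sigma n <= tau n)%N) ->
  rowmin_summable sigma id u -> rowmin_summable tau id u.
Proof.
move=> u_ge0 sigma_le_tau; apply: le_lt_trans.
by apply: lee_nneseries => [n _ _|n _]; rewrite lee_fin;
  [exact: rowmin_ge0|exact: (le_bigmin_ord xpredT (fun j => u (n, j)))].
Qed.

Lemma rowmin_summable_dilation (sigma : nat -> nat) gamma u :
  {homo sigma : m n / (m <= n)%N >-> (m <= n)%N} -> (0 < gamma)%N ->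
  (forall ij, 0 <= u ij) ->
  (forall r, (r < gamma)%N ->
    rowmin_summable (fun k => sigma (gamma * k)%N) (fun k => gamma * k + r)%N u) ->
  rowmin_summable sigma id u.
Proof.
move=> sigma_homo gamma_gt0 u_ge0.
apply: nneseries_lty_residues => // [n|r k|n]; rewrite ?rowmin_ge0//.
rewrite /rowmin mulnC -divn_eq.
apply: (le_bigmin_ord xpredT (fun j => u (n, j))).
by apply: sigma_homo; exact: leq_divM.
Qed.

End row_minima.

Section iid_array.
Local Open Scope ereal_scope.
Context {R : realType} {d' : measure_display} {T' : measurableType d'}
  {Q : probability T' R} {W : {RV Q >-> R}}
  {d : measure_display} {T : measurableType d} {P : probability T R}
  {X : nat * nat -> {RV P >-> R}}.
Hypothesis X_indep : mutually_independent P (fun ij => (X ij : T -> R)).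
Hypothesis X_law : forall ij, same_distribution P Q (X ij) W.

Definition relabel (e : nat * nat -> nat * nat) (w : T) : array R :=
  fun i => X (e i) w.

Lemma measurable_relabel e S : measurable_fun setT (relabel e : T -> array_space R S).
Proof. by apply: measurable_fun_array => i _; exact: measurable_funP. Qed.

Lemma prob_relabel_cylinder e : injective e -> forall s B,
  (forall i, measurable (B i)) ->
  P (relabel e @^-1` cylinder s B) = \prod_(i <- undup s) Q (W @^-1` B i).
Proof.
move=> e_inj s B mB.
(* Transport the constraints along e; B' j is trivial off the range of e. *)
pose B' j := [set x | forall i, e i = j -> B i x].
have B'e i : B' (e i) = B i.
  apply/seteqP; split => x /=; first exact.
  by move=> Bix i' /e_inj ->.
have mB' j : measurable (B' j).
  have [[i <-]|nej] := pselect (exists i, e i = j); first by rewrite B'e.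
  rewrite (_ : B' j = setT)//; apply/seteqP; split => x // _ i eij.
  by case: nej; exists i.
have -> : relabel e @^-1` cylinder s B =
    \bigcap_(j in [set` map e (undup s)]) ((X j : T -> R) @^-1` B' j).
  apply/seteqP; split => w /=.
    by move=> Bw _ /mapP[i] /[!mem_undup] si -> i' /e_inj ->; exact: Bw.
  move=> Bw i si; rewrite -B'e; apply: Bw => /=.
  by apply: map_f; rewrite mem_undup.
rewrite X_indep ?map_inj_uniq ?undup_uniq// big_map.
by apply: eq_bigr => i _; rewrite B'e; exact: X_law.
Qed.

Definition relabel_mfun e : {mfun T >-> array_space R setT} :=
  HB.pack (relabel e : T -> array_space R setT) (isMeasurableFun.Build _ _ _ _
    (relabel e : T -> array_space R setT) (measurable_relabel e setT)).

Lemma prob_relabel e : injective e -> forall A : set (array_space R setT),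
  measurable A -> P (relabel e @^-1` A) = P (relabel id @^-1` A).
Proof.
move=> e_inj A mA.
have := @measure_unique _ R (array_space R setT) (cylinders setT) (fun=> setT) erefl
  (@cylinders_setI_closed R setT) (fun=> @cylinders_setT R setT) _
  (distribution P (relabel_mfun e)) (distribution P (relabel_mfun id)) _ _ A mA.
apply.
- by apply/seteqP; split => // x _; exists 0%N.
- move=> _ [s [B [_ mB ->]]].
  change (P (relabel e @^-1` cylinder s B) = P (relabel id @^-1` cylinder s B)).
  by rewrite !prob_relabel_cylinder.
- move=> _; change (P (relabel e @^-1` setT) < +oo).
  by rewrite preimage_setT probability_setT ltry.
Qed.

Definition array_law : probability (array_space R setT) R :=
  distribution P (relabel_mfun id).

Lemma array_lawE A : array_law A = P (relabel id @^-1` A).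
Proof. by []. Qed.

Lemma measurable_cylinders S :
  @cylinders R S `<=` (measurable : set (set (array_space R setT))).
Proof.
by move=> A SA; apply: sub_sigma_algebra; exact: (subset_cylinders (@subsetT _ S) A SA).
Qed.

Lemma array_law_cylinderI (S1 S2 : set (nat * nat)) :
  (forall i, S1 i -> ~ S2 i) -> forall A1 A2, cylinders S1 A1 -> cylinders S2 A2 ->
  array_law (A1 `&` A2) = array_law A1 * array_law A2.
Proof.
move=> S12 _ _ [s1 [B1 [s1S mB1 ->]]] [s2 [B2 [s2S mB2 ->]]].
have s12 i : i \in s1 -> i \in s2 = false.
  by move=> is1; apply/negP => is2; exact: S12 i (s1S _ is1) (s2S _ is2).
pose B i := if i \in s1 then B1 i else B2 i.
have -> : cylinder s1 B1 `&` cylinder s2 B2 = cylinder (s1 ++ s2) B.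
  apply/seteqP; split => u /=.
    move=> [B1u B2u] i; rewrite /B mem_cat.
    by case: ifP => [? _|_]; [exact: B1u|exact: B2u].
  move=> Bu; split => i is_; have := Bu i; rewrite mem_cat is_ ?orbT /B => /(_ isT).
    by rewrite is_.
  by case: ifP => // is1; rewrite s12 in is_.
rewrite !array_lawE !prob_relabel_cylinder//; last by move=> i; rewrite /B; case: ifP.
rewrite undup_cat big_cat /=; congr (_ * _).
  rewrite (_ : [seq x <- undup s1 | x \notin s2] = undup s1); last first.
    by apply/all_filterP/allP => i /[!mem_undup] /s12 ->.
  by apply: eq_big_seq => i /[!mem_undup] is1; rewrite /B is1.
apply: eq_big_seq => i /[!mem_undup] is2.
by rewrite /B; case: ifP => // /s12; rewrite is2.
Qed.

Lemma array_law_indep {S1 S2 : set (nat * nat)} A1 A2 :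
  (forall i, S1 i -> ~ S2 i) ->
  <<s cylinders S1 >> A1 -> <<s cylinders S2 >> A2 ->
  array_law (A1 `&` A2) = array_law A1 * array_law A2.
Proof.
move=> S12; apply: (product_rule_sigma array_law).
- exact: measurable_cylinders.
- exact: cylinders_setI_closed.
- exact: cylinders_setT.
- exact: measurable_cylinders.
- exact: cylinders_setI_closed.
- exact: cylinders_setT.
- exact: array_law_cylinderI.
Qed.

Lemma array_law_bigcap_gt0 (part : nat * nat -> nat) (A : nat -> set (array R)) m :
  (forall r, (r < m)%N -> <<s cylinders [set ij | part ij = r] >> (A r)) ->
  (forall r, (r < m)%N -> 0 < array_law (A r)) ->
  <<s cylinders [set ij | (part ij < m)%N] >> (\bigcap_(r in `I_m) A r) /\
  0 < array_law (\bigcap_(r in `I_m) A r).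
Proof.
elim: m => [|m IH] sA A_gt0.
  rewrite II0 bigcap_set0 probability_setT; split => //.
  by apply: sub_sigma_algebra; exact: cylinders_setT.
have [sAm Am_gt0] := IH (fun r rm => sA r (ltnW rm)) (fun r rm => A_gt0 r (ltnW rm)).
have sAm' : <<s cylinders [set ij | part ij = m] >> (A m) by exact: sA.
rewrite IIS bigcap_setU bigcap_set1; split.
  apply: (@measurableI _ (array_space R [set ij | (part ij < m.+1)%N])).
    by apply: (sigma_cylinders_sub _ _ sAm) => ij /= /ltnW.
  by apply: (sigma_cylinders_sub _ _ sAm') => ij /= ->.
rewrite (array_law_indep _ _ _ sAm sAm') ?mule_gt0 ?A_gt0//.
by move=> ij /= + pm; rewrite pm ltnn.
Qed.

Lemma array_law_rowmin_summable rho row : injective row ->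
  array_law (rowmin_summable rho row) = array_law (rowmin_summable rho id).
Proof.
move=> row_inj; rewrite !array_lawE.
transitivity (P (relabel (fun ij => (row ij.1, ij.2)) @^-1` rowmin_summable rho id)).
  by [].
apply: prob_relabel; last exact: sigma_rowmin_summable.
by move=> [k j] [k' j'] /= [/row_inj -> ->].
Qed.

Hypothesis W_ge0 : forall t, (0 <= W t)%R.

Definition X_ge0 : set T := [set w | forall ij, (0 <= X ij w)%R].

Lemma setC_X_ge0 : ~` X_ge0 = \bigcup_n \bigcup_m (X (n, m) : T -> R) @^-1` `]-oo, 0%R[.
Proof.
apply/seteqP; split => w /=.
  move=> /existsNP[[n m]] /negP; rewrite -ltNge => Xw_lt0.
  by exists n => //; exists m => //=; rewrite in_itv.
by move=> [n _ [m _]] /=; rewrite in_itv /= => Xw_lt0 /(_ (n, m)); rewrite leNgt Xw_lt0.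
Qed.

Lemma measurable_setC_X_ge0 : measurable (~` X_ge0).
Proof.
rewrite setC_X_ge0; apply: bigcupT_measurable => n; apply: bigcupT_measurable => m.
by rewrite -[X in measurable X]setTI; exact: measurable_funP.
Qed.

Lemma prob_setC_X_ge0 : P (~` X_ge0) = 0.
Proof.
apply: measure_negligible; first exact: measurable_setC_X_ge0.
rewrite setC_X_ge0; apply: negligible_bigcup => n; apply: negligible_bigcup => m.
apply/negligibleP; first by rewrite -[X in measurable X]setTI; exact: measurable_funP.
rewrite [LHS](X_law (n, m) _ (measurable_itv _)).
rewrite (_ : _ @^-1` _ = set0) ?measure0//; apply/seteqP; split => t //=.
by rewrite in_itv /= ltNge W_ge0.
Qed.

Lemma measurable_X_ge0 : measurable X_ge0.
Proof. by rewrite -[X_ge0]setCK; apply: measurableC; exact: measurable_setC_X_ge0. Qed.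

Lemma measurable_relabel_preimage (A : set (array_space R setT)) :
  measurable A -> measurable (relabel id @^-1` A).
Proof. by move=> mA; rewrite -[X in measurable X]setTI; exact: measurable_relabel. Qed.

Lemma measurable_summable_event rho :
  measurable (relabel id @^-1` rowmin_summable rho id).
Proof. by apply: measurable_relabel_preimage; exact: sigma_rowmin_summable. Qed.

Lemma summable_forE sigma :
  [set w | \sum_(0 <= n <oo) (Lambda (fun ij => (X ij : T -> R)) sigma n w)%:E < +oo]
  = relabel id @^-1` rowmin_summable sigma id.
Proof. by []. Qed.

Lemma summable_for_le (sigma tau : nat -> nat) :
  (forall n, (sigma n <= tau n)%N) ->
  summable_for P (fun ij => (X ij : T -> R)) sigma ->
  summable_for P (fun ij => (X ij : T -> R)) tau.
Proof.
move=> sigma_le_tau; rewrite /summable_for !summable_forE => sigma_pos.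
apply: (lt_le_trans sigma_pos).
rewrite -(measureI_conull P _ _ (measurable_summable_event sigma) measurable_X_ge0
  prob_setC_X_ge0).
apply: le_measure; rewrite ?inE; last 2 first.
- exact: measurable_summable_event.
- by move=> w [sw X_ge0w]; exact: rowmin_summable_le X_ge0w sigma_le_tau sw.
by apply: measurableI; [exact: measurable_summable_event|exact: measurable_X_ge0].
Qed.

Lemma summable_for_dilation (sigma : nat -> nat) gamma :
  {homo sigma : m n / (m <= n)%N >-> (m <= n)%N} -> (0 < gamma)%N ->
  summable_for P (fun ij => (X ij : T -> R)) (fun n => sigma (gamma * n)%N) ->
  summable_for P (fun ij => (X ij : T -> R)) sigma.
Proof.
move=> sigma_homo gamma_gt0; rewrite /summable_for !summable_forE => tau_pos.
pose row r k := (gamma * k + r)%N.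
have row_inj r : injective (row r).
  by move=> k k' /addIn/eqP; rewrite eqn_mul2l gt_eqF//= => /eqP.
pose A r : set (array R) := rowmin_summable (fun k => sigma (gamma * k)%N) (row r).
case: (@array_law_bigcap_gt0 (fun ij => ij.1 %% gamma)%N A gamma)
  => [r rg|r _|sA A_gt0].
- apply: sigma_rowmin_summable => k j /=.
  by rewrite /row mulnC modnMDl modn_small.
- by rewrite array_law_rowmin_summable// array_lawE.
apply: (lt_le_trans A_gt0); rewrite array_lawE.
have mA : measurable (relabel id @^-1` \bigcap_(r in `I_gamma) A r).
  apply: measurable_relabel_preimage.
  exact: (sigma_cylinders_sub (@subsetT _ _) _ sA).
rewrite -(measureI_conull P _ _ mA measurable_X_ge0 prob_setC_X_ge0).
apply: le_measure; rewrite ?inE; last 2 first.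
- exact: measurable_summable_event.
- move=> w [Aw X_ge0w].
  exact: rowmin_summable_dilation sigma_homo gamma_gt0 X_ge0w _.
by apply: measurableI; [exact: mA|exact: measurable_X_ge0].
Qed.

End iid_array.

Theorem lemma2p1 (R : realType)
  (d' : measure_display) (T' : measurableType d') (Q : probability T' R)
  (W : {RV Q >-> R}) (hW : forall t, 0 <= W t)
  (d : measure_display) (T : measurableType d) (P : probability T R)
  (X : nat * nat -> {RV P >-> R})
  (hind : mutually_independent P (fun ij => (X ij : T -> R)))
  (hcopy : forall ij, same_distribution P Q (X ij) W)
  (sigma : nat -> nat) (hpos : forall n, (0 < sigma n)%N)
  (hinc : {homo sigma : m n / (m <= n)%N >-> (m <= n)%N})
  (gamma : nat) (hgamma : (0 < gamma)%N) :
  summable_for P (fun ij => (X ij : T -> R)) sigma <->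
  summable_for P (fun ij => (X ij : T -> R)) (fun n => sigma (gamma * n)%N).
Proof.
split.
- by apply: (summable_for_le hcopy hW) => n; apply: hinc; exact: leq_pmull.
- exact: (summable_for_dilation hind hcopy hW sigma gamma hinc hgamma).
Qed.
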